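(* Let $G$ be an $(n,n,p_s,p_d)$-two-island network with groups $V_1,V_2$, and let the implicit opinions $x_i(t)$ and explicit opinions $y_i(t)$ evolve according to the dual opinions dynamics described in the context, with common bias parameter $b>0$, common resilience $\phi\in(0,1)$, and the symmetric initial condition $x_i(0)=x_0\in(\tfrac12,1)$, $y_i(0)=y_0\in[\tfrac12,x_0]$ for $i\in V_1$ and $x_j(0)=1-x_0$, $y_j(0)=1-y_0$ for $j\in V_2$. Then for any two individuals $i,j$ in the same group, $x_i(t)=x_j(t)$ and $y_i(t)=y_j(t)$ for all $t\ge 0$. Moreover, for $i\in V_1$ and $j\in V_2$ and every $t>0$: $x_i(t)+x_j(t)=y_i(t)+y_j(t)=1$, $x_i(t)>y_i(t)>\tfrac12$, and $x_j(t)<y_j(t)<\tfrac12$.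
   Context: Let $n\ge 1$ and $p_s,p_d\in(0,1)$ with $p_s>p_d$ and $np_s,np_d$ positive integers. An $(n,n,p_s,p_d)$-two-island network is an undirected graph (no self-loops) with vertex set $V=V_1\cup V_2$, $V_1\cap V_2=\emptyset$, $|V_1|=|V_2|=n$, such that each node of $V_1$ has exactly $np_s$ neighbours in $V_1$ and $np_d$ neighbours in $V_2$, and each node of $V_2$ has exactly $np_s$ neighbours in $V_2$ and $np_d$ neighbours in $V_1$. Its degree of homophily is $h_G=p_s/p_d>1$. Let $w_{ij}\in\{0,1\}$ be the adjacency matrix, $N_i$ the set of neighbours of $i$, and $d_i=\sum_{j\in N_i}w_{ij}$. Dual opinions dynamics: each individual $i\in V$ has an implicit opinion $x_i(t)\in[0,1]$ and an explicit opinion $y_i(t)\in[0,1]$, $t=0,1,2,\dots$, updated by $$x_i(t+1)=\frac{x_i(t)^{b}s_i(t)}{x_i(t)^{b}s_i(t)+(1-x_i(t))^{b}(d_i-s_i(t))},\qquad y_i(t+1)=\phi\, x_i(t+1)+(1-\phi)\hat y_{i,avg}(t),$$ where $s_i(t)=\sum_{j\in N_i}w_{ij}y_j(t)$ and $\hat y_{i,avg}(t)=\sum_{j\in N_i}\frac{w_{ij}}{d_i}y_j(t)$. *)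

From HB Require Import structures.
From mathcomp Require Import all_boot all_order all_algebra.
From mathcomp Require Import reals exp.
Set Implicit Arguments. Unset Strict Implicit. Unset Printing Implicit Defensive.
Import Order.TTheory GRing.Theory Num.Theory.
Local Open Scope ring_scope.

(* An undirected graph without self-loops on a finite vertex type V is a
   symmetric irreflexive relation e; w_ij = 1 iff e i j. *)

(* (n,n,p_s,p_d)-two-island network, with ks = n p_s and kd = n p_d. *)
Definition two_island (V : finType) (e : rel V) (V1 V2 : {set V})
    (n ks kd : nat) : Prop :=
  symmetric e /\ irreflexive e /\
  [disjoint V1 & V2] /\ V1 :|: V2 = [set: V] /\
  #|V1| = n /\ #|V2| = n /\
  (forall i, i \in V1 ->
     #|[set j in V1 | e i j]| = ks /\ #|[set j in V2 | e i j]| = kd) /\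
  (forall i, i \in V2 ->
     #|[set j in V2 | e i j]| = ks /\ #|[set j in V1 | e i j]| = kd).

Definition deg {R : realType} (V : finType) (e : rel V) (i : V) : R :=
  \sum_(j | e i j) 1.

Definition nbsum {R : realType} (V : finType) (e : rel V) (y : V -> R) (i : V) : R :=
  \sum_(j | e i j) y j.

Definition nbavg {R : realType} (V : finType) (e : rel V) (y : V -> R) (i : V) : R :=
  \sum_(j | e i j) (1 / deg e i) * y j.

Definition dual_dynamics {R : realType} (V : finType) (e : rel V) (b phi : R)
    (x y : nat -> V -> R) : Prop :=
  forall (t : nat) (i : V),
    x t.+1 i =
      (x t i `^ b * nbsum e (y t) i) /
      (x t i `^ b * nbsum e (y t) i + (1 - x t i) `^ b * (deg e i - nbsum e (y t) i))
    /\ y t.+1 i = phi * x t.+1 i + (1 - phi) * nbavg e (y t) i.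

(* A state in which every node of V1 holds (a, c) and every node
   of V2 holds (1 - a, 1 - c) is mapped by the dynamics to a state of the same
   shape: every node of V1 sees the neighbourhood average
   u = (ks c + kd (1 - c)) / (ks + kd), every node of V2 sees 1 - u, and the
   update is symmetric under x |-> 1 - x, u |-> 1 - u.  So the whole dynamics
   reduces to a map (a, c) |-> (a', c') of the plane.  Homophily (kd < ks)
   gives u >= 1/2 whenever c >= 1/2; the bias a^b > (1 - a)^b for a > 1/2
   pushes a' = a^b u / (a^b u + (1 - a)^b (1 - u)) strictly between u and 1;
   and c' = phi a' + (1 - phi) u lies strictly between u and a'. *)

From HB Require Import structures.
From mathcomp Require Import all_boot all_order all_algebra.
From mathcomp Require Import reals exp.
From mathcomp Require Import ring lra.
Set Implicit Arguments. Unset Strict Implicit. Unset Printing Implicit Defensive.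
Import Order.TTheory GRing.Theory Num.Theory.
Local Open Scope ring_scope.

Lemma nbavgE (R : realType) (V : finType) (e : rel V) (y : V -> R) (i : V) :
  nbavg e y i = nbsum e y i / deg e i.
Proof. by rewrite /nbavg /nbsum -mulr_sumr mulrC mul1r. Qed.

Section BiasUpdate.
Variable R : realType.

Definition bias_update (b x u : R) : R :=
  x `^ b * u / (x `^ b * u + (1 - x) `^ b * (1 - u)).

Lemma bias_update_ratio (b x s d : R) : d != 0 ->
  x `^ b * s / (x `^ b * s + (1 - x) `^ b * (d - s)) = bias_update b x (s / d).
Proof.
move=> d0; rewrite /bias_update.
have -> : x `^ b * (s / d) + (1 - x) `^ b * (1 - s / d)
          = (x `^ b * s + (1 - x) `^ b * (d - s)) / d by field.
by rewrite mulrA -[in RHS]mulf_div divff ?mulr1 ?invr_eq0.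
Qed.

Lemma dual_dynamicsE (V : finType) (e : rel V) (b phi : R) x y t i :
  dual_dynamics e b phi x y -> deg e i != 0 :> R ->
  x t.+1 i = bias_update b (x t i) (nbavg e (y t) i) /\
  y t.+1 i = phi * x t.+1 i + (1 - phi) * nbavg e (y t) i.
Proof. by move=> /(_ t i) [-> ->] d0; rewrite nbavgE bias_update_ratio. Qed.

Lemma bias_update_compl (b x u : R) : 0 < x < 1 -> 0 < u < 1 ->
  bias_update b (1 - x) (1 - u) = 1 - bias_update b x u.
Proof.
move=> /andP[x0 x1] /andP[u0 u1]; rewrite /bias_update subKr.
have A0 : 0 < x `^ b by apply: powR_gt0.
have B0 : 0 < (1 - x) `^ b by apply: powR_gt0; lra.
by field; nra.
Qed.

Lemma bias_update_gt (b x u : R) : 0 < b -> 1/2 < x < 1 -> 0 < u < 1 ->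
  u < bias_update b x u < 1.
Proof.
move=> b0 /andP[x0 x1] /andP[u0 u1]; rewrite /bias_update.
set A := x `^ b; set B := (1 - x) `^ b.
have B0 : 0 < B by apply: powR_gt0; lra.
have BA : B < A by apply: gt0_ltr_powR; rewrite ?nnegrE; lra.
have D0 : 0 < A * u + B * (1 - u) by nra.
(* [A u / D - u = (A - B) u (1 - u) / D] with [D = A u + B (1 - u)] *)
have gap : 0 < (A - B) * (u * (1 - u)) by apply: mulr_gt0; nra.
rewrite ltr_pdivrMr // ltr_pdivlMr // mul1r; apply/andP; split; nra.
Qed.

End BiasUpdate.

Section IslandMean.
Variable R : realFieldType.

Definition island_mean (ks kd c : R) : R := (ks * c + kd * (1 - c)) / (ks + kd).

Lemma island_mean_compl (ks kd c : R) : ks + kd != 0 ->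
  island_mean ks kd (1 - c) = 1 - island_mean ks kd c.
Proof. by move=> d0; rewrite /island_mean; field. Qed.

Lemma island_mean_gt0_lt1 (ks kd c : R) : 0 < ks -> 0 <= kd -> 0 < c < 1 ->
  0 < island_mean ks kd c < 1.
Proof.
move=> ks0 kd0 /andP[c0 c1]; rewrite /island_mean.
have d0 : 0 < ks + kd by lra.
by rewrite ltr_pdivrMr // ltr_pdivlMr // mul0r mul1r; apply/andP; split; nra.
Qed.

Lemma island_mean_ge_half (ks kd c : R) : 0 < ks -> 0 <= kd <= ks -> 1/2 <= c ->
  1/2 <= island_mean ks kd c.
Proof.
move=> ks0 /andP[kd0 kdks] c12; rewrite /island_mean.
have d0 : 0 < ks + kd by lra.
have gap : 0 <= (ks - kd) * (c - 1/2) by apply: mulr_ge0; lra.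
by rewrite ler_pdivlMr //; lra.
Qed.

End IslandMean.

Definition island_next (R : realType) (b phi ks kd : R) (p : R * R) : R * R :=
  let u := island_mean ks kd p.2 in
  let a := bias_update b p.1 u in
  (a, phi * a + (1 - phi) * u).

Lemma island_next_bounds (R : realType) (b phi ks kd : R) (p : R * R) :
  0 < b -> 0 < phi < 1 -> 0 < ks -> 0 <= kd <= ks ->
  1/2 < p.1 < 1 -> 1/2 <= p.2 < 1 ->
  let q := island_next b phi ks kd p in 1/2 < q.2 < q.1 /\ q.1 < 1.
Proof.
move=> b0 /andP[phi0 phi1] ks0 /andP[kd0 kdks] a01 /andP[c0 c1] /=.
set u := island_mean ks kd p.2.
have u12 : 1/2 <= u by apply: island_mean_ge_half; rewrite ?kd0.
have u01 : 0 < u < 1 by apply: island_mean_gt0_lt1; rewrite ?kd0 //; lra.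
have /andP[ua a'1] := bias_update_gt b0 a01 u01.
by rewrite a'1; split => //; apply/andP; split; nra.
Qed.

Section TwoIslands.
Variables (R : realType) (V : finType) (e : rel V) (V1 V2 : {set V}) (ks kd : nat).
Hypotheses (V12_disj : [disjoint V1 & V2]) (V12_cover : V1 :|: V2 = [set: V]).
Hypothesis nb_V1 : {in V1, forall i,
  #|[set j in V1 | e i j]| = ks /\ #|[set j in V2 | e i j]| = kd}.
Hypothesis nb_V2 : {in V2, forall i,
  #|[set j in V2 | e i j]| = ks /\ #|[set j in V1 | e i j]| = kd}.
Hypothesis ks_gt0 : (0 < ks)%N.

Lemma nbsum_two_valued (f : V -> R) (c1 c2 : R) (i : V) :
  {in V1, forall j, f j = c1} -> {in V2, forall j, f j = c2} ->
  nbsum e f i = c1 * #|[set j in V1 | e i j]|%:R + c2 * #|[set j in V2 | e i j]|%:R.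
Proof.
move=> f1 f2; rewrite /nbsum (bigID (mem V1)) /= !mulr_natr -!sumr_const.
have inV2 j : (j \notin V1) = (j \in V2).
  have := in_setT j; rewrite -V12_cover inE.
  by case: (boolP (j \in V1)) => [/(disjointFr V12_disj) -> | _ /= ->].
congr (_ + _); apply: eq_big => j.
- by rewrite inE andbC.
- by move=> /andP[_ /f1].
- by rewrite inE inV2 andbC.
- by move=> /andP[_]; rewrite inV2 => /f2.
Qed.

Lemma island_weight_neq0 : ks%:R + kd%:R != 0 :> R.
Proof. by rewrite -natrD pnatr_eq0 -lt0n ltn_addr. Qed.

Lemma deg_two_islands (i : V) : deg e i = ks%:R + kd%:R :> R.
Proof.
have -> : deg e i = nbsum e (fun=> 1) i :> R by [].
rewrite (@nbsum_two_valued _ 1 1) // !mul1r.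
by have := in_setT i; rewrite -V12_cover inE => /orP[/nb_V1[-> ->] | /nb_V2[-> ->]];
  rewrite // addrC.
Qed.

Definition island_state (p : R * R) (xt yt : V -> R) : Prop :=
  {in V1, forall i, xt i = p.1 /\ yt i = p.2} /\
  {in V2, forall j, xt j = 1 - p.1 /\ yt j = 1 - p.2}.

Lemma nbavg_island_state (p : R * R) (xt yt : V -> R) :
  island_state p xt yt ->
  {in V1, forall i, nbavg e yt i = island_mean ks%:R kd%:R p.2} /\
  {in V2, forall j, nbavg e yt j = 1 - island_mean ks%:R kd%:R p.2}.
Proof.
move=> [s1 s2].
have y1 : {in V1, forall j, yt j = p.2} by move=> j /s1[].
have y2 : {in V2, forall j, yt j = 1 - p.2} by move=> j /s2[].
split=> i hi; rewrite nbavgE deg_two_islands (nbsum_two_valued _ y1 y2).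
- by have [-> ->] := nb_V1 hi; rewrite /island_mean; congr (_ / _); ring.
- have [-> ->] := nb_V2 hi; rewrite -island_mean_compl ?island_weight_neq0 //.
  by rewrite /island_mean subKr; congr (_ / _); ring.
Qed.

Lemma island_state_next (b phi : R) (x y : nat -> V -> R) (t : nat) (p : R * R) :
  dual_dynamics e b phi x y -> 0 < p.1 < 1 -> 0 < p.2 < 1 ->
  island_state p (x t) (y t) ->
  island_state (island_next b phi ks%:R kd%:R p) (x t.+1) (y t.+1).
Proof.
move=> dyn a01 c01 st; have [avg1 avg2] := nbavg_island_state st.
have u01 : 0 < island_mean ks%:R kd%:R p.2 < 1.
  by apply: island_mean_gt0_lt1; rewrite ?ltr0n.
have d0 i : deg e i != 0 :> R by rewrite deg_two_islands island_weight_neq0.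
split=> i hi; have [-> ->] := dual_dynamicsE t dyn (d0 i).
- by have [-> _] := st.1 i hi; rewrite avg1.
- have [-> _] := st.2 i hi; rewrite avg2 // bias_update_compl //.
  by rewrite /island_next /=; split=> //; ring.
Qed.

Lemma island_state_uniform (p : R * R) (xt yt : V -> R) :
  island_state p xt yt -> forall i j,
  (i \in V1 /\ j \in V1) \/ (i \in V2 /\ j \in V2) -> xt i = xt j /\ yt i = yt j.
Proof.
move=> [s1 s2] i j.
by case=> [[/s1[-> ->] /s1[-> ->]] | [/s2[-> ->] /s2[-> ->]]].
Qed.

Lemma island_state_polarized (p : R * R) (xt yt : V -> R) :
  island_state p xt yt -> 1/2 < p.2 < p.1 ->
  {in V1 & V2, forall i j,
    xt i + xt j = 1 /\ yt i + yt j = 1 /\ yt i < xt i /\ 1/2 < yt i /\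
    xt j < yt j /\ yt j < 1/2}.
Proof.
move=> [s1 s2] /andP[c12 ca] i j /s1[-> ->] /s2[-> ->].
by do !split; lra.
Qed.

End TwoIslands.

Theorem theorem1 (R : realType) (V : finType) (e : rel V) (V1 V2 : {set V})
    (n ks kd : nat) (ps pd : R)
    (hn : (1 <= n)%N)
    (hpd0 : 0 < pd) (hpdps : pd < ps) (hps1 : ps < 1)
    (hks : n%:R * ps = ks%:R) (hkd : n%:R * pd = kd%:R)
    (hks0 : (0 < ks)%N) (hkd0 : (0 < kd)%N)
    (hG : two_island e V1 V2 n ks kd)
    (b phi : R) (hb : 0 < b) (hphi0 : 0 < phi) (hphi1 : phi < 1)
    (x0 y0 : R) (hx0l : 1 / 2 < x0) (hx0r : x0 < 1)
    (hy0l : 1 / 2 <= y0) (hy0r : y0 <= x0)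
    (x y : nat -> V -> R)
    (hinit1 : forall i, i \in V1 -> x 0%N i = x0 /\ y 0%N i = y0)
    (hinit2 : forall j, j \in V2 -> x 0%N j = 1 - x0 /\ y 0%N j = 1 - y0)
    (hdyn : dual_dynamics e b phi x y) :
  (forall (t : nat) (i j : V),
      (i \in V1 /\ j \in V1) \/ (i \in V2 /\ j \in V2) ->
      x t i = x t j /\ y t i = y t j) /\
  (forall (t : nat) (i j : V), (0 < t)%N -> i \in V1 -> j \in V2 ->
      x t i + x t j = 1 /\ y t i + y t j = 1 /\
      y t i < x t i /\ 1 / 2 < y t i /\
      x t j < y t j /\ y t j < 1 / 2).
Proof.
case: hG => _ [_ [V12_disj [V12_cover [_ [_ [nb_V1 nb_V2]]]]]].
have kd_range : 0 <= (kd%:R : R) <= ks%:R.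
  by rewrite ler0n -hks -hkd ler_pM2l ?ltW // ltr0n.
have ks_pos : 0 < ks%:R :> R by rewrite ltr0n.
have phi01 : 0 < phi < 1 by apply/andP.
have next_bounds := island_next_bounds hb phi01 ks_pos kd_range.
pose traj t := iter t (island_next b phi ks%:R kd%:R) (x0, y0).
have bounds t : 1/2 < (traj t).1 < 1 /\ 1/2 <= (traj t).2 < 1.
  elim: t => [|t [a01 c01]]; first by split; apply/andP; split=> /=; lra.
  have /= [/andP[c12 ca] a1] := next_bounds _ a01 c01.
  by split; apply/andP; split; lra.
have state t : island_state V1 V2 (traj t) (x t) (y t).
  elim: t => [|t IH]; first by split=> i; [move/hinit1 | move/hinit2].
  have [/andP[a0 a1] /andP[c0 c1]] := bounds t.
  apply: (island_state_next V12_disj V12_cover nb_V1 nb_V2 hks0 hdyn _ _ IH);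
    apply/andP; split; lra.
split=> [t | [//|t] i j _ hi hj]; first exact: island_state_uniform (state t).
have [strict _] : 1/2 < (traj t.+1).2 < (traj t.+1).1 /\ (traj t.+1).1 < 1
  := next_bounds _ (bounds t).1 (bounds t).2.
exact: island_state_polarized (state t.+1) strict i j hi hj.
Qed.
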